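(* Let $M\subseteq\mathbb R^n$ be a bounded manifold admitting a carpeting function $\phi$. Let $V$ be a closed subset of $M$ such that $V\cap U$ has finitely many connected components for every open box $U\subseteq\mathbb R^n$. Then for every sequence $(r_\kappa)_{\kappa\in\mathbb N}$ of positive reals with $r_\kappa\to0$, the sequence $\big(V\cap\phi^{-1}(r_\kappa)\big)_\kappa$ converges to $\operatorname{fr}V$ in the Hausdorff sense, i.e. $\operatorname{fr}V=\lim_\kappa\big(V\cap\phi^{-1}(r_\kappa)\big)$.
   Context: A carpeting function on $M$ is a continuous proper map $\phi:M\to(0,\infty)$ such that $\phi(x)\to0$ as $x\to y$ for every $y$ in the frontier of $M$ taken in the one-point compactification $\mathbb R^n\cup\{\infty\}$. $\operatorname{fr}V=\operatorname{cl}V\setminus V$ (closure in $\mathbb R^n$). For bounded sets $A_\kappa\subseteq\mathbb R^n$, $\lim_\kappa A_\kappa=C$ means $\operatorname{cl}A_\kappa\to C$ in the Hausdorff metric on compact subsets of $\mathbb R^n$ (with $\emptyset$ included, at distance $\infty$ from nonempty sets). A box is a product of nonempty open intervals. *)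

From HB Require Import structures.
From mathcomp Require Import all_boot all_order all_algebra.
From mathcomp Require Import all_classical all_reals all_analysis.
Set Implicit Arguments. Unset Strict Implicit. Unset Printing Implicit Defensive.
Import Order.TTheory GRing.Theory Num.Theory.
Import numFieldNormedType.Exports.
Local Open Scope classical_set_scope.
Local Open Scope ring_scope.

(* Points of R^n are row vectors 'rV[R]_n (with the library's max-norm). *)

Definition bounded_in (R : realType) (n : nat) (A : set 'rV[R]_n) : Prop :=
  exists r : R, forall x, A x -> `|x| <= r.

Definition is_manifold (R : realType) (n : nat) (M : set 'rV[R]_n) : Prop :=
  exists d : nat, forall x, M x ->
    exists (U : set 'rV[R]_n) (W : set 'rV[R]_d)
           (f : 'rV[R]_n -> 'rV[R]_d) (g : 'rV[R]_d -> 'rV[R]_n),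
      open U /\ U x /\ open W /\
      {within M `&` U, continuous f} /\
      f @` (M `&` U) = W /\
      {within W, continuous g} /\
      (forall z, (M `&` U) z -> g (f z) = z) /\
      (forall w, W w -> (M `&` U) (g w) /\ f (g w) = w).

(* Carpeting function on M: continuous, positive, proper map M -> (0,oo),
   tending to 0 at every point of the frontier of M taken in the one-point
   compactification (points of cl M \ M, and the point at infinity when M is
   unbounded). *)
Definition carpeting (R : realType) (n : nat) (M : set 'rV[R]_n)
    (phi : 'rV[R]_n -> R) : Prop :=
  [/\ {within M, continuous phi},
      (forall x, M x -> 0 < phi x),
      (forall K : set R, compact K -> K `<=` [set t | 0 < t] ->
          compact (M `&` phi @^-1` K)),
      (forall y, (closure M `\` M) y ->
          forall e : R, 0 < e -> exists2 dl : R, 0 < dl &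
            forall x, M x -> `|x - y| < dl -> phi x < e) &
      (~ bounded_in M ->
          forall e : R, 0 < e -> exists r0 : R,
            forall x, M x -> r0 < `|x| -> phi x < e)].

Definition open_box (R : realType) (n : nat) (U : set 'rV[R]_n) : Prop :=
  exists a b : 'I_n -> R, (forall i, a i < b i) /\
    U = [set x | forall i, a i < x ord0 i < b i].

Definition finitely_many_components (R : realType) (n : nat)
    (A : set 'rV[R]_n) : Prop :=
  finite_set [set connected_component A x | x in A].

Definition frontier_set (R : realType) (n : nat) (V : set 'rV[R]_n) :=
  closure V `\` V.

(* lim_k A_k = C : C is compact and cl A_k -> C in the Hausdorff metric
   (with the empty set at distance oo from nonempty sets). *)
Definition hausdorff_lim (R : realType) (n : nat)
    (A : nat -> set 'rV[R]_n) (C : set 'rV[R]_n) : Prop :=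
  compact C /\
  forall e : R, 0 < e -> \forall k \near \oo,
    (forall x, closure (A k) x -> exists2 y, C y & `|x - y| < e) /\
    (forall y, C y -> exists2 x, closure (A k) x & `|x - y| < e).

From HB Require Import structures.
From mathcomp Require Import all_boot all_order all_algebra.
From mathcomp Require Import all_classical all_reals all_analysis.
From mathcomp Require Import lra.
Set Implicit Arguments. Unset Strict Implicit. Unset Printing Implicit Defensive.
Import Order.TTheory GRing.Theory Num.Theory.
Import numFieldNormedType.Exports.
Local Open Scope classical_set_scope.
Local Open Scope ring_scope.

(* On the part of cl V at distance >= e from fr V, which is a compact subset
   of M, phi has a positive lower bound; so for small r every point of V with
   phi = r lies near fr V.  Conversely, near y in fr V the values of phi on V
   become arbitrarily small, and V meets a small box around y in finitely many
   components, so one connected component carries arbitrarily small values of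
   phi; by the intermediate value theorem it meets every small level set.
   Compactness of fr V makes this second estimate uniform in y. *)

Lemma rV_dist_ltP (R : realType) n (x y : 'rV[R]_n) e : 0 < e ->
  `|x - y| < e <-> forall i, `|x ord0 i - y ord0 i| < e.
Proof.
move=> e0; have -> : (`|x - y| < e) = ball x e y :> Prop by rewrite mx_norm_ball.
split; first by case=> _ xy i; exact: xy ord0 i.
by move=> xy; split => // i j; rewrite (ord1 i); exact: xy.
Qed.

Lemma norm_ball_open_box (R : realType) n (y : 'rV[R]_n) e : 0 < e ->
  open_box [set x | `|x - y| < e].
Proof.
move=> e0; exists (fun i => y ord0 i - e), (fun i => y ord0 i + e).
split; first by move=> i; lra.
apply/seteqP; split => x /=.
  by move=> /(rV_dist_ltP x y e0) xy i; rewrite -ltr_distl.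
by move=> xy; apply/(rV_dist_ltP x y e0) => i; rewrite ltr_distl.
Qed.

Lemma closure_dist_lt (R : realType) n (A : set 'rV[R]_n) x e :
  closure A x -> 0 < e -> exists2 y, A y & `|x - y| < e.
Proof.
move=> clx e0; have [y [Ay xy]] := clx _ (nbhsx_ballx x e e0).
by exists y => //; move: xy; rewrite -ball_normE.
Qed.

Lemma within_continuous_dist_lt (R : realType) (U : normedModType R)
    (A : set U) (f : U -> R) x e :
  {within A, continuous f} -> A x -> 0 < e ->
  exists2 d, 0 < d & forall z, A z -> `|x - z| < d -> `|f x - f z| < e.
Proof.
move=> /subspace_continuousP /(_ x) fA Ax e0.
have /cvgrPdist_lt /(_ e e0) := fA Ax.
rewrite near_withinE => /nbhs_normP[d d0 fxz].
by exists d => // z Az xz; apply: fxz.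
Qed.

Lemma norm_le_bounded_set (R : realType) n (A : set 'rV[R]_n) b :
  (forall x, A x -> `|x| <= b) -> bounded_set A.
Proof.
move=> Ab; rewrite /= /bounded_near; near=> c => x Ax.
apply: le_trans (Ab x Ax) _; near: c; exact: nbhs_pinfty_ge (num_real b).
Unshelve. all: by end_near.
Qed.

Lemma bounded_in_closure_compact (R : realType) n (A : set 'rV[R]_n) :
  bounded_in A -> compact (closure A).
Proof.
move=> [b Ab]; apply: bounded_closed_compact; last exact: closed_closure.
apply: (@norm_le_bounded_set _ _ _ (b + 1)) => x clx.
have [y Ay xy] := closure_dist_lt clx ltr01.
have := Ab y Ay; have := ler_distD y x 0; rewrite !subr0; lra.
Qed.

Lemma compact_near_uniform (R : realType) (U : normedModType R) (I : Type)
    (F : set_system I) (K : set U) (A : I -> set U) e :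
  Filter F -> compact K -> 0 < e ->
  (forall y, K y -> \forall k \near F, exists2 x, A k x & `|x - y| < e / 2) ->
  \forall k \near F, forall y, K y -> exists2 x, A k x & `|x - y| < e.
Proof.
move=> FF Kc e0 nearK; have e2 : 0 < e / 2 by rewrite divr_gt0.
move: Kc; rewrite compact_cover => /(_ _ K (fun y => ball y (e / 2))).
case=> [y _|y Ky|D DK cover]; first exact: ball_open.
  by exists y => //; exact: ballxx.
have near_D := filter_bigI
  (f := fun y' => [set k | exists2 x, A k x & `|x - y'| < e / 2])
  FF (fun y' y'D => nearK y' (set_mem (DK y' y'D))).
apply: filterS near_D => k Ak y Ky.
have [y' y'D] := cover y Ky; rewrite -ball_normE /= => y'y.
have [x Akx xy'] := Ak y' y'D.
by exists x => //; have := ler_distD y' x y; lra.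
Qed.

Lemma compact_pos_lb (T : topologicalType) (R : realType) (f : T -> R)
    (A : set T) :
  compact A -> {within A, continuous f} -> (forall x, A x -> 0 < f x) ->
  exists2 m, 0 < m & forall x, A x -> m <= f x.
Proof.
move=> cA cf fA; have [->|/set0P A0] := eqVneq A set0; first by exists 1.
have [c /set_mem Ac fc] := @compact_EVT_min _ _ f A A0 cA cf.
by exists (f c); [exact: fA | move=> x Ax; apply: fc; exact: mem_set].
Qed.

Lemma connected_level_point (T : topologicalType) (R : realType) (f : T -> R)
    (C : set T) c t :
  connected C -> {within C, continuous f} -> C c ->
  (forall d, 0 < d -> exists2 x, C x & f x < d) -> 0 < t -> t <= f c ->
  exists2 x, C x & f x = t.
Proof.
move=> Cconn fC Cc small t0 tc.
have /connected_intervalP fC_itv := connected_continuous_connected Cconn fC.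
have [x Cx fxt] := small t t0.
have [z Cz <-] : (f @` C) t.
  by apply: (fC_itv (f x) (f c)); [exists x|exists c|rewrite tc ltW].
by exists z.
Qed.

Section ExistsForallPos.
Variables (R : realType) (T : choiceType) (P : R -> T -> Prop).
Hypothesis P_mono : forall d d' A, d <= d' -> P d A -> P d' A.

Lemma seq_exists_forall_pos (s : seq T) :
  (forall d, 0 < d -> exists2 A, A \in s & P d A) ->
  exists2 A, A \in s & forall d, 0 < d -> P d A.
Proof.
elim: s => [|a s IHs] Ps; first by have [A] := Ps 1 ltr01; rewrite in_nil.
have [Pa|] := pselect (forall d, 0 < d -> P d a).
  by exists a => //; rewrite mem_head.
move=> /existsNP[d0 /not_implyP[d0_gt0 nPa]].
have [|A As PA] := IHs; last by exists A => //; rewrite in_cons As orbT.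
move=> d d_gt0; have md : 0 < Num.min d d0 by rewrite lt_min d_gt0 d0_gt0.
have [A] := Ps _ md; rewrite in_cons => /orP[/eqP->|As] PA.
  by exfalso; apply: nPa; apply: P_mono PA; rewrite ge_min lexx orbT.
by exists A => //; apply: P_mono PA; rewrite ge_min lexx.
Qed.

Lemma finite_exists_forall_pos (F : set T) : finite_set F ->
  (forall d, 0 < d -> exists2 A, F A & P d A) ->
  exists2 A, F A & forall d, 0 < d -> P d A.
Proof.
move=> /finite_fsetP[X ->] FP.
have [|A XA PA] := @seq_exists_forall_pos (finmap.enum_fset X); last by exists A.
by move=> d d_gt0; have [A XA PA] := FP d d_gt0; exists A.
Qed.

End ExistsForallPos.

Section CarpetingLevelSets.
Variables (R : realType) (n : nat) (M V : set 'rV[R]_n) (phi : 'rV[R]_n -> R).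
Hypothesis M_bounded : bounded_in M.
Hypothesis phi_cont : {within M, continuous phi}.
Hypothesis phi_gt0 : forall x, M x -> 0 < phi x.
Hypothesis phi_frontier : forall y, (closure M `\` M) y ->
  forall e, 0 < e -> exists2 d, 0 < d & forall x, M x -> `|x - y| < d -> phi x < e.
Hypothesis VM : V `<=` M.
Hypothesis closure_VM : closure V `&` M `<=` V.

Local Notation frV := (frontier_set V).
Local Notation level t := (V `&` phi @^-1` [set t]).

Lemma frontier_sub_closure_setD : frV `<=` closure M `\` M.
Proof.
move=> y [clVy nVy]; split; first exact: closureS VM _ clVy.
by move=> My; apply/nVy/closure_VM.
Qed.

Lemma frontier_closed : closed frV.
Proof.
move=> z clz; have clVz : closure V z.
  by apply: closed_closure; apply: closureS clz => y [].
(* phi stays above phi z / 2 on V near z, but drops below it on V near the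
   frontier points that accumulate at z. *)
split => // Vz; have phiz := phi_gt0 (VM Vz).
have phiz2 : 0 < phi z / 2 by rewrite divr_gt0.
have [d d0 phi_near_z] := within_continuous_dist_lt phi_cont (VM Vz) phiz2.
have d2 : 0 < d / 2 by rewrite divr_gt0.
have [y fy zy] := closure_dist_lt clz d2.
have [dl dl0 phi_near_y] := phi_frontier (frontier_sub_closure_setD fy) phiz2.
have md : 0 < Num.min dl (d / 2) by rewrite lt_min dl0 d2.
have [x Vx yx] := closure_dist_lt (proj1 fy) md.
move: yx; rewrite lt_min => /andP[yx_dl yx_d2].
have phix_small : phi x < phi z / 2.
  by apply: phi_near_y (VM Vx) _; rewrite distrC.
have : `|phi z - phi x| < phi z / 2.
  by apply: phi_near_z (VM Vx) _; have := ler_distD y z x; lra.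
by have := ler_norm (phi z - phi x); lra.
Qed.

Lemma frontier_compact : compact frV.
Proof.
apply: subclosed_compact frontier_closed (bounded_in_closure_compact M_bounded) _.
by move=> y /frontier_sub_closure_setD[].
Qed.

Lemma small_phi_near_frontier e : 0 < e ->
  exists2 m, 0 < m & forall a, V a -> phi a < m -> exists2 y, frV y & `|a - y| < e.
Proof.
move=> e0; pose S := closure V `\` \bigcup_(y in frV) ball y e.
have SM : S `<=` M.
  move=> x [clVx nearx]; apply: VM; apply: contrapT => nVx; apply: nearx.
  by exists x; [split|exact: ballxx].
have S_compact : compact S.
  apply: subclosed_compact (bounded_in_closure_compact M_bounded) _.
    apply: closedI; first exact: closed_closure.
    by rewrite closedC; apply: bigcup_open => y _; exact: ball_open.
  by move=> x /SM; exact: subset_closure.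
have [m m0 phi_ge_m] := compact_pos_lb S_compact
  (continuous_subspaceW SM phi_cont) (fun x Sx => phi_gt0 (SM x Sx)).
exists m => // a Va phia.
have [y fy ya] : (\bigcup_(y in frV) ball y e) a.
  apply: contrapT => nb; have := phi_ge_m a (conj (subset_closure Va) nb).
  by rewrite leNgt phia.
by exists y => //; rewrite distrC; move: ya; rewrite -ball_normE.
Qed.

Hypothesis V_box_components :
  forall U, open_box U -> finitely_many_components (V `&` U).

Lemma frontier_small_phi_component y e : frV y -> 0 < e ->
  exists C, [/\ connected C, C `<=` V, C `<=` [set x | `|x - y| < e],
    C !=set0 & forall d, 0 < d -> exists2 x, C x & phi x < d].
Proof.
move=> fy e0; set U := [set x | `|x - y| < e].
have small_mono d d' (C : set 'rV[R]_n) : d <= d' ->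
    (exists2 x, C x & phi x < d) -> exists2 x, C x & phi x < d'.
  by move=> dd' [x Cx phix]; exists x => //; exact: lt_le_trans dd'.
have small_somewhere d : 0 < d ->
    exists2 C, [set connected_component (V `&` U) x | x in V `&` U] C &
      exists2 x, C x & phi x < d.
  move=> d0.
  have [dl dl0 phi_near_y] := phi_frontier (frontier_sub_closure_setD fy) d0.
  have md : 0 < Num.min dl e by rewrite lt_min dl0 e0.
  have [x Vx yx] := closure_dist_lt (proj1 fy) md.
  move: yx; rewrite distrC lt_min => /andP[xy_dl xy_e].
  exists (connected_component (V `&` U) x); first by exists x.
  by exists x; [exact: connected_component_refl | exact: phi_near_y (VM Vx) _].
have [_ [c [Vc Uc] <-] small] := finite_exists_forall_pos small_mono
  (V_box_components (norm_ball_open_box y e0)) small_somewhere.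
exists (connected_component (V `&` U) c); split => //.
- exact: component_connected.
- by move=> x /connected_component_sub[].
- by move=> x /connected_component_sub[].
- by exists c; exact: connected_component_refl.
Qed.

Variable r : nat -> R.
Hypothesis r_gt0 : forall k, 0 < r k.
Hypothesis r_cvg0 : r @ \oo --> 0.

Lemma level_sets_near_frontier e : 0 < e ->
  \forall k \near \oo, forall x, closure (level (r k)) x ->
    exists2 y, frV y & `|x - y| < e.
Proof.
move=> e0; have e2 : 0 < e / 2 by rewrite divr_gt0.
have [m m0 near_frV] := small_phi_near_frontier e2.
near=> k => x clx; have [a [Va phia] xa] := closure_dist_lt clx e2.
have [|y fy ay] := near_frV a Va.
  by rewrite phia; near: k; exact: cvgr_lt r_cvg0 _ m0.
by exists y => //; have := ler_distD a x y; lra.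
Unshelve. all: by end_near.
Qed.

Lemma level_sets_approach_frontier y e : frV y -> 0 < e ->
  \forall k \near \oo, exists2 x, level (r k) x & `|x - y| < e.
Proof.
move=> fy e0.
have [C [Cconn CV Cy [c Cc] small]] := frontier_small_phi_component fy e0.
have phi_C : {within C, continuous phi}.
  by apply: continuous_subspaceW phi_cont => x /CV /VM.
near=> k; have [|x Cx phix] := connected_level_point Cconn phi_C Cc small (r_gt0 k).
  by apply/ltW; near: k; exact: cvgr_lt r_cvg0 _ (phi_gt0 (VM (CV c Cc))).
by exists x; [exact: (conj (CV x Cx) phix) | exact: Cy].
Unshelve. all: by end_near.
Qed.

Lemma level_sets_hausdorff_lim : hausdorff_lim (fun k => level (r k)) frV.
Proof.
split; first exact: frontier_compact.
move=> e e0; have e2 : 0 < e / 2 by rewrite divr_gt0.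
near=> k; split; near: k; first exact: level_sets_near_frontier.
apply: filterS (compact_near_uniform _ frontier_compact e0
  (fun y fy => level_sets_approach_frontier fy e2)) => k near_k y fy.
by have [x kx xy] := near_k y fy; exists x => //; exact: subset_closure.
Unshelve. all: by end_near.
Qed.

End CarpetingLevelSets.

Theorem lemma1p7 (R : realType) (n : nat) (M : set 'rV[R]_n)
    (phi : 'rV[R]_n -> R) (V : set 'rV[R]_n) :
  is_manifold M -> bounded_in M -> carpeting M phi ->
  V `<=` M -> closure V `&` M `<=` V ->
  (forall U : set 'rV[R]_n, open_box U -> finitely_many_components (V `&` U)) ->
  forall r : nat -> R, (forall k, 0 < r k) -> r @ \oo --> 0 ->
    hausdorff_lim (fun k => V `&` phi @^-1` [set r k]) (frontier_set V).
Proof.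
move=> _ M_bounded [phi_cont phi_gt0 _ phi_frontier _] VM closure_VM V_box.
move=> r r_gt0 r_cvg0.
exact: (level_sets_hausdorff_lim M_bounded phi_cont phi_gt0 phi_frontier VM
  closure_VM V_box r_gt0 r_cvg0).
Qed.
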